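(* Assume $\hat w=\sup_xw(x)<\infty$. Let $\lambda\ge1$ and $z_1\in\mathbb{S}$. Then $0<w(z_1)\frac{w(z_1)+2\lfloor\lambda\rfloor-\lambda}{(w(z_1)+\lfloor\lambda\rfloor)(w(z_1)+\lfloor\lambda\rfloor-1)}\le\epsilon(\lambda,z_1)\le\frac{2\hat w}{2\hat w+\lambda-1}$, and $\frac1\lambda\le b(\lambda)\le\epsilon(\lambda)\le\frac{2\hat w}{2\hat w+\lambda-1}$, where $b(\lambda)=\frac1{\lfloor\lambda\rfloor}-\frac{\lambda-\lfloor\lambda\rfloor}{(\lfloor\lambda\rfloor+1)\lfloor\lambda\rfloor}$. Moreover, for $\lambda>1$, $1<\frac{\lfloor\lambda\rfloor^2+3\lfloor\lambda\rfloor-\lambda+1}{\lfloor\lambda\rfloor^2-\lfloor\lambda\rfloor+\lambda-1}\le\frac{1+\epsilon(\lambda)}{1-\epsilon(\lambda)}\le\frac{4\hat w+\lambda-1}{\lambda-1}$.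
   Context: Let $\pi,q$ be probability densities with respect to a $\sigma$-finite measure $\mu$ on $\mathbb{X}$ with $q>0$ wherever $\pi>0$; $\pi(dx)=\pi(x)\mu(dx)$, $q(dx)=q(x)\mu(dx)$, $\mathbb{S}=\{\pi>0\}$, $w=\pi/q$ on $\mathbb{S}$ and $0$ elsewhere. For integer $N\ge1$ and $z_1\in\mathbb{S}$, $\epsilon(N,z_1)=\int_{\mathbb{X}^{N-1}}\frac{w(z_1)}{\sum_{i=1}^Nw(z_i)}\prod_{n=2}^Nq(dz_n)$ and $\epsilon(N)=\int_{\mathbb{S}}\epsilon(N,z)\pi(dz)$; for real $\lambda\ge1$ with $\beta=\lfloor\lambda\rfloor+1-\lambda$, $\epsilon(\lambda,x)=\beta\epsilon(\lfloor\lambda\rfloor,x)+(1-\beta)\epsilon(\lfloor\lambda\rfloor+1,x)$ and $\epsilon(\lambda)=\beta\epsilon(\lfloor\lambda\rfloor)+(1-\beta)\epsilon(\lfloor\lambda\rfloor+1)$. *)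

From HB Require Import structures.
From mathcomp Require Import all_boot all_order all_algebra.
From mathcomp Require Import all_classical all_reals all_analysis.
Set Implicit Arguments. Unset Strict Implicit. Unset Printing Implicit Defensive.
Import Order.TTheory GRing.Theory Num.Theory.
Local Open Scope classical_set_scope.
Local Open Scope ring_scope.
Local Open Scope ereal_scope.

Section Defs.
Context {d : measure_display} {X : measurableType d} {R : realType}.
Variables (mu : {measure set X -> \bar R}) (pi q : X -> R).

Definition wgt (x : X) : R := if (0 < pi x)%R then (pi x / q x)%R else 0%R.

(* ISk a k s = int_{X^k} a / (a + s + sum_{n=1}^k w(z_n)) prod q(dz_n),
   written as the iterated integral (z_1 outermost); q(dz) = q(z) mu(dz). *)
Fixpoint ISk (a : R) (k : nat) (s : R) : \bar R :=
  match k with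
  | O => (a / (a + s))%:E
  | k'.+1 => \int[mu]_z (ISk a k' (s + wgt z)%R * (q z)%:E)
  end.

(* epsilon(N, z1), N >= 1 : integral over X^{N-1} *)
Definition epsN (N : nat) (z1 : X) : \bar R := ISk (wgt z1) N.-1 0%R.

Definition epsNbar (N : nat) : \bar R :=
  \int[mu]_(z in [set x | (0 < pi x)%R]) (epsN N z * (pi z)%:E).

Definition flo (l : R) : nat := Num.truncn l.

Definition betal (l : R) : R := ((flo l)%:R + 1 - l)%R.

Definition epsl (l : R) (x : X) : \bar R :=
  (betal l)%:E * epsN (flo l) x + (1 - betal l)%:E * epsN (flo l).+1 x.

Definition epsL (l : R) : \bar R :=
  (betal l)%:E * epsNbar (flo l) + (1 - betal l)%:E * epsNbar (flo l).+1.

End Defs.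

Definition blam {R : realType} (l : R) : R :=
  ((flo l)%:R^-1 - (l - (flo l)%:R) / (((flo l)%:R + 1) * (flo l)%:R))%R.

(* Write eps(N, z) as an iterated integral over N - 1 draws from q.  Since
   int q = int w q = 1, an integrand bounded below (above) by a + b w
   integrates to at least (at most) a + b, and by convexity of t |-> 1/t such
   affine bounds come from tangents and chords.  Induction on the number of
   draws gives w(z) / (w(z) + N - 1) <= eps(N, z) with tangent lines and
   eps(N, z) <= (2 w^ - 1) / (2 w^ - 2 + N) with chords over [0, w^].
   Integrating against pi, with the tangent of v |-> v^2 / (v + k) at v = 1,
   gives 1 / N <= eps(N).  The bounds for real lambda follow by linear
   interpolation between floor(lambda) and floor(lambda) + 1, and those on
   (1 + eps) / (1 - eps) from its monotonicity in eps. *)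

From HB Require Import structures.
From mathcomp Require Import all_boot all_order all_algebra.
From mathcomp Require Import all_classical all_reals all_analysis.
From mathcomp Require Import measurable_realfun ring lra.
Import Order.TTheory GRing.Theory Num.Theory.
Local Open Scope classical_set_scope.
Local Open Scope ring_scope.

Local Ltac field_lra := field; do ?[apply/andP; split]; apply: lt0r_neq0; lra.

Section integral_monotonicity.
Local Open Scope ereal_scope.
Context d (T : measurableType d) (R : realType).
Variable mu : {measure set T -> \bar R}.

(* The integral of a nonnegative function is a supremum over the simple
   functions below it, hence monotone without any measurability assumption:
   the integrands [ISk] are never shown to be measurable. *)
Lemma ge0_le_integral_nonmeasurable (f g : T -> \bar R) :
  (forall x, 0 <= f x) -> (forall x, f x <= g x) ->
  \int[mu]_x f x <= \int[mu]_x g x.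
Proof.
move=> f0 fg; have g0 x : 0 <= g x by exact: le_trans (fg x).
rewrite !ge0_integralTE//; apply: ereal_sup_le => _ [h hf <-].
by exists h => //= x; exact: le_trans (hf x) (fg x).
Qed.

Lemma le_integral_nonmeasurable (f g : T -> \bar R) :
  (forall x, 0 <= g x) -> (forall x, f x <= g x) ->
  \int[mu]_x f x <= \int[mu]_x g x.
Proof.
move=> g0 fg; rewrite integralE.
apply: (@le_trans _ _ (\int[mu]_x f^\+ x)).
  rewrite -[leRHS]sube0 leeB//.
  by apply: integral_ge0 => x _; exact: funeneg_ge0.
apply: ge0_le_integral_nonmeasurable => [x|x]; first exact: funepos_ge0.
by rewrite funeposE ge_max fg g0.
Qed.

End integral_monotonicity.

Section inverse_bounds.
Context {R : realFieldType}.
Implicit Types a c v x B k : R.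

Lemma tangent_le_invr c x : 0 < c -> 0 < x -> 2 / c - x / c ^+ 2 <= x^-1.
Proof.
move=> c0 x0; rewrite -subr_ge0.
have -> : x^-1 - (2 / c - x / c ^+ 2) = (x - c) ^+ 2 / (x * c ^+ 2).
  by field_lra.
by rewrite divr_ge0 ?sqr_ge0// mulr_ge0 ?sqr_ge0// ltW.
Qed.

Lemma invrD_le_chord x v B : 0 < x -> 0 <= v <= B ->
  (x + v)^-1 <= x^-1 - v / (x * (x + B)).
Proof.
move=> x0 /andP[v0 vB]; rewrite -subr_ge0.
have -> : x^-1 - v / (x * (x + B)) - (x + v)^-1 =
    v * (B - v) / (x * (x + B) * (x + v)).
  by field_lra.
by rewrite divr_ge0 ?mulr_ge0//; lra.
Qed.

(* Equality holds at [x = B], so [B / (2 B - 1)] is the largest admissible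
   shift. *)
Lemma chord_recursion_le x B : 1 <= B -> B <= x ->
  x^-1 - (x * (x + B))^-1 <= (x + B / (2 * B - 1))^-1.
Proof.
move=> B1 Bx; have x0 : 0 < x by lra.
have c0 : 0 < 2 * B - 1 by lra.
have d0 : 0 < x * (2 * B - 1) + B by rewrite addr_gt0 ?mulr_gt0//; lra.
rewrite -subr_ge0.
have -> : (x + B / (2 * B - 1))^-1 - (x^-1 - (x * (x + B))^-1) =
    (B - 1) * (x - B) / (x * (x + B) * (x * (2 * B - 1) + B)).
  by field_lra.
apply: divr_ge0; first by apply: mulr_ge0; lra.
by apply/ltW/mulr_gt0 => //; apply: mulr_gt0; lra.
Qed.

Lemma ler_div_addr a B k : 0 < a -> a <= B -> 0 <= k -> a / (a + k) <= B / (B + k).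
Proof.
move=> a0 aB k0; rewrite -subr_ge0.
have -> : B / (B + k) - a / (a + k) = k * (B - a) / ((B + k) * (a + k)).
  by field_lra.
by rewrite divr_ge0 ?mulr_ge0//; lra.
Qed.

Lemma tangent_le_sqr_div v k : 0 <= k -> 0 < v ->
  - (k / (1 + k) ^+ 2) + (1 + 2 * k) / (1 + k) ^+ 2 * v <= v * (v / (v + k)).
Proof.
move=> k0 v0; rewrite -subr_ge0.
have -> : v * (v / (v + k)) - (- (k / (1 + k) ^+ 2) + (1 + 2 * k) / (1 + k) ^+ 2 * v)
    = (k * (v - 1)) ^+ 2 / ((v + k) * (1 + k) ^+ 2).
  by field_lra.
by rewrite divr_ge0 ?sqr_ge0// mulr_ge0 ?sqr_ge0//; lra.
Qed.

End inverse_bounds.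

Section interpolation.
Context {R : realFieldType}.
Implicit Types b e n lam a B : R.

Lemma ler_ratio_1pm b e : b <= e -> e < 1 -> (1 + b) / (1 - b) <= (1 + e) / (1 - e).
Proof.
move=> be e1; rewrite -subr_ge0.
have -> : (1 + e) / (1 - e) - (1 + b) / (1 - b) = 2 * (e - b) / ((1 - e) * (1 - b)).
  by field_lra.
by rewrite divr_ge0 ?mulr_ge0//; lra.
Qed.

Lemma interp_lower_pointwise n lam a : 1 <= n -> 0 < a ->
  (n + 1 - lam) * (a / (a + (n - 1))) + (1 - (n + 1 - lam)) * (a / (a + n)) =
  a * (a + 2 * n - lam) / ((a + n) * (a + n - 1)).
Proof. by move=> n1 a0; field_lra. Qed.

Lemma interp_lower_pointwise_gt0 n lam a : 1 <= n -> lam < n + 1 -> 0 < a ->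
  0 < a * (a + 2 * n - lam) / ((a + n) * (a + n - 1)).
Proof. by move=> n1 lamn a0; rewrite divr_gt0 ?mulr_gt0//; lra. Qed.

Lemma interp_lower_average n lam : 1 <= n ->
  (n + 1 - lam) * n^-1 + (1 - (n + 1 - lam)) * (n + 1)^-1 =
  n^-1 - (lam - n) / ((n + 1) * n).
Proof. by move=> n1; field_lra. Qed.

Lemma invr_le_interp_lower_average n lam : 1 <= n -> n <= lam -> lam < n + 1 ->
  lam^-1 <= n^-1 - (lam - n) / ((n + 1) * n).
Proof.
move=> n1 nlam lamn; rewrite -subr_ge0.
have -> : n^-1 - (lam - n) / ((n + 1) * n) - lam^-1 =
    (lam - n) * (n + 1 - lam) / (n * (n + 1) * lam).
  by field_lra.
by rewrite divr_ge0 ?mulr_ge0//; lra.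
Qed.

Lemma interp_upper n lam B : 1 <= n -> n <= lam -> lam < n + 1 -> 1 <= B ->
  (n + 1 - lam) * ((2 * B - 1) / (2 * B - 1 + (n - 1))) +
  (1 - (n + 1 - lam)) * ((2 * B - 1) / (2 * B - 1 + n)) <= 2 * B / (2 * B + lam - 1).
Proof.
move=> n1 nlam lamn B1; rewrite -subr_ge0.
have -> : 2 * B / (2 * B + lam - 1) - ((n + 1 - lam) * ((2 * B - 1) / (2 * B - 1 + (n - 1))) +
    (1 - (n + 1 - lam)) * ((2 * B - 1) / (2 * B - 1 + n))) =
    ((2 * B - 1 + n) * (n - 1) + (2 * B - 1) * (lam - n) ^+ 2) /
    ((2 * B - 1 + (n - 1)) * (2 * B - 1 + n) * (2 * B + lam - 1)).
  by field_lra.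
apply: divr_ge0; last by rewrite !mulr_ge0//; lra.
by rewrite addr_ge0// mulr_ge0 ?sqr_ge0//; lra.
Qed.

Lemma ratio_1pm_interp_lower_average n lam b : 1 <= n -> n <= lam -> 1 < lam ->
  b = n^-1 - (lam - n) / ((n + 1) * n) ->
  (1 + b) / (1 - b) = (n ^+ 2 + 3 * n - lam + 1) / (n ^+ 2 - n + lam - 1).
Proof.
move=> n1 nlam lam1 ->; have nn : n <= n ^+ 2 by rewrite expr2 ler_peMl//; lra.
by field_lra.
Qed.

End interpolation.

Lemma lee_interp {R : realDomainType} {b : R} {x1 x2 y1 y2 : \bar R} :
  0 <= b <= 1 -> (x1 <= y1)%E -> (x2 <= y2)%E ->
  (b%:E * x1 + (1 - b)%:E * x2 <= b%:E * y1 + (1 - b)%:E * y2)%E.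
Proof.
move=> /andP[b0 b1] le1 le2.
by rewrite leeD// lee_wpmul2l// lee_fin subr_ge0.
Qed.

Lemma flo_bounds {R : realType} (lam : R) : 1 <= lam ->
  [/\ (0 < flo lam)%N, 1 <= (flo lam)%:R :> R, (flo lam)%:R <= lam
    & lam < (flo lam)%:R + 1].
Proof.
move=> lam1; rewrite natr1 truncnS_gt truncn_le (le_trans ler01 lam1) ler1n.
by rewrite truncn_gt0.
Qed.

Lemma betal_itv {R : realType} (lam : R) : 1 <= lam -> 0 <= betal lam <= 1.
Proof. by move=> /flo_bounds[_ _ nlam lamn]; rewrite /betal; apply/andP; split; lra. Qed.

Section importance_weight.
Context d (X : measurableType d) (R : realType).
Variables (mu : {measure set X -> \bar R}) (pi q : X -> R).
Hypotheses (mpi : measurable_fun setT pi) (mq : measurable_fun setT q).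
Hypotheses (pi_ge0 : forall x, 0 <= pi x) (q_ge0 : forall x, 0 <= q x).
Hypotheses (pi_int1 : (\int[mu]_x (pi x)%:E = 1)%E) (q_int1 : (\int[mu]_x (q x)%:E = 1)%E).
Hypothesis q_gt0 : forall x, 0 < pi x -> 0 < q x.

Local Notation w := (wgt pi q).

Lemma wgt_ge0 x : 0 <= w x.
Proof. by rewrite /wgt; case: ifP => // pi0; rewrite divr_ge0. Qed.

Lemma wgt_gt0 {x} : 0 < pi x -> 0 < w x.
Proof. by move=> pi0; rewrite /wgt pi0 divr_gt0 ?q_gt0. Qed.

Lemma wgt_eq0 {x} : ~~ (0 < pi x) -> w x = 0.
Proof. by move=> /negPf pi0; rewrite /wgt pi0. Qed.

Lemma wgt_mulq x : w x * q x = pi x.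
Proof.
rewrite /wgt; case: ifPn => [pi0|]; first by rewrite divfK ?gt_eqF ?q_gt0.
by rewrite mul0r -leNgt => pi_le0; apply/eqP; rewrite eq_le pi_le0 pi_ge0.
Qed.

Lemma integral_comb_q_pi (a b : R) :
  (\int[mu]_x (a * q x + b * pi x)%:E = (a + b)%:E)%E.
Proof.
have integrable_density (f : X -> R) : measurable_fun setT f -> (forall x, 0 <= f x) ->
    (\int[mu]_x (f x)%:E = 1)%E -> mu.-integrable setT (EFin \o f).
  move=> mf f0 f1; apply/integrableP; split; first exact/measurable_EFinP.
  by under eq_integral => x _ do rewrite /= ger0_norm//; rewrite f1 ltry.
have iq := integrable_density _ mq q_ge0 q_int1.
have ipi := integrable_density _ mpi pi_ge0 pi_int1.
under eq_integral => x _ do rewrite EFinD !EFinM.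
rewrite integralD//; [|exact: integrableZl|exact: integrableZl].
by rewrite !integralZl// q_int1 pi_int1 !mule1.
Qed.

Lemma affine_le_integral_q (f : X -> \bar R) (a b : R) :
  (forall x, 0 <= f x)%E -> (forall x, (a + b * w x)%:E <= f x)%E ->
  ((a + b)%:E <= \int[mu]_x (f x * (q x)%:E))%E.
Proof.
move=> f0 lef; rewrite -integral_comb_q_pi; apply: le_integral_nonmeasurable => x.
  by rewrite mule_ge0// lee_fin.
by rewrite -wgt_mulq mulrA -mulrDl EFinM lee_wpmul2r ?lee_fin.
Qed.

Lemma integral_q_le_affine (f : X -> \bar R) (a b : R) :
  (forall x, 0 <= f x)%E -> (forall x, f x <= (a + b * w x)%:E)%E ->
  (\int[mu]_x (f x * (q x)%:E) <= (a + b)%:E)%E.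
Proof.
move=> f0 fle; rewrite -integral_comb_q_pi; apply: le_integral_nonmeasurable => x.
  have := le_trans (f0 x) (fle x); rewrite lee_fin => ab0.
  by rewrite -wgt_mulq mulrA -mulrDl EFinM mule_ge0 ?lee_fin.
by rewrite -wgt_mulq mulrA -mulrDl EFinM lee_wpmul2r ?lee_fin.
Qed.

Lemma wgt_ub_ge1 (B : R) : (forall x, w x <= B) -> 1 <= B.
Proof.
move=> wB; rewrite -lee_fin.
have w_ge0 x : (0 <= (w x)%:E)%E by rewrite lee_fin wgt_ge0.
apply: (@le_trans _ _ (\int[mu]_x ((w x)%:E * (q x)%:E))%E).
  rewrite -[1]add0r; apply: affine_le_integral_q => // x.
  by rewrite mul1r add0r.
rewrite -[B]addr0; apply: integral_q_le_affine => // x.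
by rewrite mul0r addr0 lee_fin.
Qed.

Lemma ISk_ge0 a k s : 0 <= a -> 0 <= s -> (0 <= ISk mu pi q a k s)%E.
Proof.
move=> a0; elim: k s => [|k IH] s s0 /=; first by rewrite lee_fin divr_ge0 ?addr_ge0.
apply: integral_ge0 => z _.
by rewrite mule_ge0 ?lee_fin ?IH ?addr_ge0 ?wgt_ge0.
Qed.

Lemma ISk_ge a k s : 0 < a -> 0 <= s ->
  ((a / (a + s + k%:R))%:E <= ISk mu pi q a k s)%E.
Proof.
move=> a0; elim: k s => [|k IH] s s0 /=; first by rewrite addr0.
have k0 : 0 <= k%:R :> R by [].
set y := a + s + k%:R; have y0 : 0 < y by rewrite /y; lra.
rewrite -natr1 addrA -/y.
(* Tangent of t |-> a / t at the q-mean y + 1 of y + w. *)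
have -> : a / (y + 1) = a * (2 / (y + 1) - y / (y + 1) ^+ 2) + - (a / (y + 1) ^+ 2).
  by field_lra.
apply: affine_le_integral_q => z.
  exact: ISk_ge0 (ltW a0) (addr_ge0 s0 (wgt_ge0 z)).
have wz0 := wgt_ge0 z.
apply: le_trans (IH _ (addr_ge0 s0 wz0)); rewrite lee_fin.
rewrite (_ : a + (s + w z) + k%:R = y + w z); last by rewrite /y; ring.
rewrite (_ : _ + _ * w z = a * (2 / (y + 1) - (y + w z) / (y + 1) ^+ 2)).
  by rewrite ler_pM2l// tangent_le_invr//; lra.
by field_lra.
Qed.

Lemma epsN_ge N z : (0 < N)%N -> 0 < pi z ->
  ((w z / (w z + (N%:R - 1)))%:E <= epsN mu pi q N z)%E.
Proof.
move=> N0 pz; rewrite -(prednK N0) -natr1 addrK /epsN /=.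
by have := @ISk_ge _ N.-1 _ (wgt_gt0 pz) (lexx 0); rewrite addr0.
Qed.

Lemma epsN_ge0 N z : (0 <= epsN mu pi q N z)%E.
Proof. exact: ISk_ge0 (wgt_ge0 z) (lexx 0). Qed.

Lemma epsNbarE N :
  epsNbar mu pi q N = (\int[mu]_z ((w z)%:E * epsN mu pi q N z * (q z)%:E))%E.
Proof.
rewrite /epsNbar integral_mkcond; apply: eq_integral => z _; rewrite /patch.
have -> : (z \in [set x | 0 < pi x]) = (0 < pi z).
  by apply/idP/idP => [/set_mem//|]; exact: mem_set.
case: ifPn => [pz|/wgt_eq0->]; last by rewrite !mul0e.
by rewrite -wgt_mulq EFinM muleA (muleC (epsN _ _ _ _ _)).
Qed.

Lemma epsNbar_ge N : (0 < N)%N -> ((N%:R^-1)%:E <= epsNbar mu pi q N)%E.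
Proof.
move=> N0; rewrite epsNbarE.
have N1 : 1 <= N%:R :> R by rewrite ler1n.
set k : R := N%:R - 1; have k0 : 0 <= k by rewrite /k subr_ge0.
have -> : N%:R^-1 = - (k / (1 + k) ^+ 2) + (1 + 2 * k) / (1 + k) ^+ 2.
  by rewrite /k; field_lra.
apply: affine_le_integral_q => z; first by rewrite mule_ge0 ?lee_fin ?wgt_ge0 ?epsN_ge0.
have [pz|/wgt_eq0->] := boolP (0 < pi z); last first.
  by rewrite mul0e mulr0 addr0 lee_fin oppr_le0 divr_ge0 ?sqr_ge0.
apply: (@le_trans _ _ ((w z)%:E * (w z / (w z + k))%:E)%E).
  by rewrite -EFinM lee_fin tangent_le_sqr_div ?wgt_gt0.
by apply: lee_wpmul2l; [rewrite lee_fin wgt_ge0 | exact: epsN_ge].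
Qed.

Lemma epsl_ge lam z (n := (flo lam)%:R) : 1 <= lam -> 0 < pi z ->
  ((w z * (w z + 2 * n - lam) / ((w z + n) * (w z + n - 1)))%:E
    <= epsl mu pi q lam z)%E.
Proof.
move=> lam1 pz; have [flo0 n1 _ _] := flo_bounds lam lam1.
apply: le_trans (lee_interp (betal_itv lam lam1)
  (epsN_ge _ _ flo0 pz) (epsN_ge _ _ (ltn0Sn _) pz)).
rewrite -[(flo lam).+1%:R]natr1 addrK -!EFinM -EFinD lee_fin /betal.
by rewrite (interp_lower_pointwise _ _ _ n1 (wgt_gt0 pz)).
Qed.

Lemma epsL_ge lam : 1 <= lam -> ((blam lam)%:E <= epsL mu pi q lam)%E.
Proof.
move=> lam1; have [flo0 n1 _ _] := flo_bounds lam lam1.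
apply: le_trans (lee_interp (betal_itv lam lam1)
  (epsNbar_ge _ flo0) (epsNbar_ge _ (ltn0Sn _))).
by rewrite -!EFinM -EFinD lee_fin -natr1 /betal interp_lower_average.
Qed.

Section bounded_weight.
Variable B : R.
Hypothesis wgt_le : forall x, w x <= B.

Let B_ge1 : 1 <= B. Proof. exact: wgt_ub_ge1. Qed.

Lemma ISk_le a k s : 0 < a -> a <= B -> 0 <= s ->
  (ISk mu pi q a k s <= (B / (B + s + B / (2 * B - 1) * k%:R))%:E)%E.
Proof.
move=> a0 aB; have B1 := B_ge1.
have al0 : 0 <= B / (2 * B - 1) by rewrite divr_ge0//; lra.
elim: k s => [|k IH] s s0 /=; first by rewrite mulr0 addr0 lee_fin ler_div_addr.
set x := B + s + B / (2 * B - 1) * k%:R.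
have Bx : B <= x by rewrite /x -addrA lerDl addr_ge0// mulr_ge0.
have x0 : 0 < x by lra.
rewrite (_ : B + s + _ * k.+1%:R = x + B / (2 * B - 1)); last first.
  by rewrite /x -natr1; ring.
apply: le_trans (@integral_q_le_affine _ (B / x) (- (B / (x * (x + B)))) _ _) _.
- by move=> z; exact: ISk_ge0 (ltW a0) (addr_ge0 s0 (wgt_ge0 z)).
- move=> z; have wz0 := wgt_ge0 z.
  apply: le_trans (IH _ (addr_ge0 s0 wz0)) _; rewrite lee_fin.
  rewrite (_ : B + (s + w z) + _ = x + w z); last by rewrite /x; ring.
  rewrite (_ : _ + _ * w z = B * (x^-1 - w z / (x * (x + B)))); last first.
    by field_lra.
  by rewrite ler_pM2l ?invrD_le_chord ?wgt_le ?wz0//; lra.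
rewrite lee_fin (_ : B / x + _ = B * (x^-1 - (x * (x + B))^-1)); last first.
  by field_lra.
by rewrite ler_pM2l ?chord_recursion_le//; lra.
Qed.

Lemma epsN_le N z : (0 < N)%N -> 0 < pi z ->
  (epsN mu pi q N z <= ((2 * B - 1) / (2 * B - 1 + (N%:R - 1)))%:E)%E.
Proof.
move=> N0 pz; have B1 := B_ge1.
rewrite -(prednK N0) -[N.-1.+1%:R]natr1 addrK /epsN /=.
have k0 : 0 <= N.-1%:R :> R by [].
have d0 : 0 < B * (2 * B - 1) + B * N.-1%:R.
  by rewrite ltr_wpDr ?mulr_ge0 ?mulr_gt0//; lra.
have -> : (2 * B - 1) / (2 * B - 1 + N.-1%:R) = B / (B + 0 + B / (2 * B - 1) * N.-1%:R).
  by field_lra.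
exact: ISk_le (wgt_gt0 pz) (wgt_le z) (lexx 0).
Qed.

Lemma epsNbar_le N : (0 < N)%N ->
  (epsNbar mu pi q N <= ((2 * B - 1) / (2 * B - 1 + (N%:R - 1)))%:E)%E.
Proof.
move=> N0; rewrite epsNbarE -[X in (_ <= X%:E)%E]add0r.
apply: integral_q_le_affine => z; first by rewrite mule_ge0 ?lee_fin ?wgt_ge0 ?epsN_ge0.
have [pz|/wgt_eq0->] := boolP (0 < pi z); last by rewrite mul0e mulr0 addr0.
rewrite add0r mulrC EFinM.
by apply: lee_wpmul2l; [rewrite lee_fin wgt_ge0 | exact: epsN_le].
Qed.

Lemma epsl_le lam z : 1 <= lam -> 0 < pi z ->
  (epsl mu pi q lam z <= (2 * B / (2 * B + lam - 1))%:E)%E.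
Proof.
move=> lam1 pz; have [flo0 n1 nlam lamn] := flo_bounds lam lam1.
apply: le_trans (lee_interp (betal_itv lam lam1)
  (epsN_le _ _ flo0 pz) (epsN_le _ _ (ltn0Sn _) pz)) _.
by rewrite -[(flo lam).+1%:R]natr1 addrK -!EFinM -EFinD lee_fin interp_upper ?B_ge1.
Qed.

Lemma epsL_le lam : 1 <= lam -> (epsL mu pi q lam <= (2 * B / (2 * B + lam - 1))%:E)%E.
Proof.
move=> lam1; have [flo0 n1 nlam lamn] := flo_bounds lam lam1.
apply: le_trans (lee_interp (betal_itv lam lam1)
  (epsNbar_le _ flo0) (epsNbar_le _ (ltn0Sn _))) _.
by rewrite -[(flo lam).+1%:R]natr1 addrK -!EFinM -EFinD lee_fin interp_upper ?B_ge1.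
Qed.

Lemma ratio_1pm_epsL lam (n := (flo lam)%:R) (e := fine (epsL mu pi q lam)) : 1 < lam ->
  [/\ 1 < (n ^+ 2 + 3 * n - lam + 1) / (n ^+ 2 - n + lam - 1),
      (n ^+ 2 + 3 * n - lam + 1) / (n ^+ 2 - n + lam - 1) <= (1 + e) / (1 - e)
    & (1 + e) / (1 - e) <= (4 * B + lam - 1) / (lam - 1)].
Proof.
move=> lam1; have lam1' := ltW lam1; have B1 := B_ge1.
have [_ n1 nlam lamn] := flo_bounds lam lam1'.
have /andP[be eu] : blam lam <= e <= 2 * B / (2 * B + lam - 1).
  move: (epsL_ge lam lam1') (epsL_le lam lam1'); rewrite /e.
  by case: (epsL mu pi q lam) => [r||] //=; rewrite !lee_fin => -> ->.
have u1 : 2 * B / (2 * B + lam - 1) < 1 by rewrite ltr_pdivrMr; lra.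
have b0 : 0 < blam lam.
  apply: lt_le_trans (invr_le_interp_lower_average _ _ n1 nlam lamn).
  by rewrite invr_gt0; lra.
rewrite -(ratio_1pm_interp_lower_average _ _ (blam lam) n1 nlam lam1 erefl).
split; first by rewrite ltr_pdivlMr; lra.
  exact: ler_ratio_1pm be (le_lt_trans eu u1).
have -> : (4 * B + lam - 1) / (lam - 1) =
    (1 + 2 * B / (2 * B + lam - 1)) / (1 - 2 * B / (2 * B + lam - 1)).
  by field_lra.
exact: ler_ratio_1pm eu u1.
Qed.

End bounded_weight.

End importance_weight.

Theorem lemma8p1 (d : measure_display) (X : measurableType d) (R : realType)
  (mu : {measure set X -> \bar R}) (pi q : X -> R) :
  sigma_finite setT mu ->
  measurable_fun setT pi -> measurable_fun setT q ->
  (forall x, 0 <= pi x) -> (forall x, 0 <= q x) ->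
  ((\int[mu]_x (pi x)%:E)%E = 1%E) -> ((\int[mu]_x (q x)%:E)%E = 1%E) ->
  (forall x, 0 < pi x -> 0 < q x) ->
  (exists M : R, forall x, wgt pi q x <= M) ->
  forall (lam : R) (z1 : X), 1 <= lam -> 0 < pi z1 ->
  let w := wgt pi q in
  let what := sup (range w) in
  let fl := (flo lam)%:R : R in
  let ub := 2 * what / (2 * what + lam - 1) in
  [/\ 0 < w z1 * (w z1 + 2 * fl - lam) / ((w z1 + fl) * (w z1 + fl - 1)),
      ((w z1 * (w z1 + 2 * fl - lam) / ((w z1 + fl) * (w z1 + fl - 1)))%:E
         <= epsl mu pi q lam z1)%E,
      (epsl mu pi q lam z1 <= ub%:E)%E,
      [/\ lam^-1 <= blam lam, ((blam lam)%:E <= epsL mu pi q lam)%E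
        & (epsL mu pi q lam <= ub%:E)%E]
    & 1 < lam ->
      let e := fine (epsL mu pi q lam) in
      [/\ 1 < (fl ^+ 2 + 3 * fl - lam + 1) / (fl ^+ 2 - fl + lam - 1),
          (fl ^+ 2 + 3 * fl - lam + 1) / (fl ^+ 2 - fl + lam - 1)
            <= (1 + e) / (1 - e)
        & (1 + e) / (1 - e) <= (4 * what + lam - 1) / (lam - 1)]].
Proof.
(* The iterated integrals are never exchanged, so sigma-finiteness is unused. *)
move=> _ mpi mq pi_ge0 q_ge0 pi_int1 q_int1 q_gt0 [M wM] lam z1 lam1 pz1 w what fl ub.
have wgt_le x : w x <= what.
  by apply: ub_le_sup; [exists M => _ [y _ <-]; exact: wM | exists x].
have [_ n1 nlam lamn] := flo_bounds lam lam1.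
split; first by apply: interp_lower_pointwise_gt0; rewrite ?wgt_gt0.
- by apply: epsl_ge.
- by apply: epsl_le.
- by split; [apply: invr_le_interp_lower_average | apply: epsL_ge | apply: epsL_le].
- by move=> lam_gt1; apply: ratio_1pm_epsL.
Qed.
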